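(* Let $n\ge 1$, let $c\in\mathbb{R}^n$ with $c_1\ge c_2\ge\cdots\ge c_n\ge 0$, and let $u\in\mathbb{R}^n$ with $u_i>0$ for all $i$. Let $f(x)=\frac12\left(\sum_{i=1}^n x_i\right)^2-\sum_{i=1}^n c_ix_i$. For $k=0,\dots,n$ let $U_k=\sum_{i=1}^k u_i$ ($U_0=0$) and let $x^{(k)}$ be the vector with $x^{(k)}_i=u_i$ for $i\le k$ and $x^{(k)}_i=0$ for $i>k$. For $k=1,\dots,n$ let $G_k=U_{k-1}+\frac12 u_k-c_k$, and suppose $\bar n$ is the smallest index in $\{1,\dots,n\}$ with $G_{\bar n}\ge 0$. Let $e_i$ denote the $i$-th standard unit vector of $\mathbb{R}^n$. (i) If $\bar n>1$, let $\delta_1=\min\{c_{\bar n-1}-U_{\bar n-2},\,u_{\bar n-1}\}$, $\delta_2=\max\{c_{\bar n}-U_{\bar n-1},\,0\}$, $\bar x=x^{(\bar n-2)}+\delta_1e_{\bar n-1}$ and $\tilde x=x^{(\bar n-1)}+\delta_2e_{\bar n}$. Then $\min\{f(\bar x),f(\tilde x)\}$ is the optimal value of the problem of minimizing $f(x)$ subject to $x^{(\bar n-2)}\le x\le x^{(\bar n)}$ (componentwise). (ii) If $\bar n=1$, let $\delta=\min\{c_1,u_1\}$ and $\tilde x=\delta e_1$. Then $f(\tilde x)$ is the optimal value of the problem of minimizing $f(x)$ subject to $x^{(0)}\le x\le x^{(1)}$.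
   Context: Inequalities between vectors are componentwise. *)

(* Vectors in R^n are functions 'I_n -> R; index i (1-based)
   in the paper corresponds to the ordinal of value i-1. *)
From mathcomp Require Import all_boot all_order all_algebra.
Set Implicit Arguments. Unset Strict Implicit.
Import Order.TTheory GRing.Theory Num.Theory.
Local Open Scope ring_scope.

Section Defs.
Variables (R : realFieldType) (n : nat).

Definition fobj (c x : 'I_n -> R) : R :=
  (\sum_(i < n) x i) ^+ 2 / 2%:R - \sum_(i < n) c i * x i.

Definition Usum (u : 'I_n -> R) (k : nat) : R := \sum_(i < n | (i < k)%N) u i.

Definition xk (u : 'I_n -> R) (k : nat) : 'I_n -> R :=
  fun i => if (i < k)%N then u i else 0.

Definition evec (j : 'I_n) : 'I_n -> R := fun i => if i == j then 1 else 0.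

(* G_{j+1} = U_j + u_{j+1}/2 - c_{j+1}, for the ordinal j (0-based) *)
Definition Gval (c u : 'I_n -> R) (j : 'I_n) : R :=
  Usum u j + u j / 2%:R - c j.

Definition vle (x y : 'I_n -> R) : Prop := forall i, x i <= y i.

Definition optimal_value (f : ('I_n -> R) -> R) (S : ('I_n -> R) -> Prop) (v : R) :=
  (forall x, S x -> v <= f x) /\
  (forall e, 0 < e -> exists x, S x /\ f x < v + e).

(* the predecessor ordinal of j (equal to j if j = 0) *)
Definition prevo (j : 'I_n) : 'I_n :=
  Ordinal (leq_ltn_trans (leq_pred j) (ltn_ord j)).

End Defs.
Arguments evec R [n] j _.

(* On the box x^(n̄-2) <= x <= x^(n̄) only the coordinates n̄-1 and n̄ are free, so f is,
   up to a constant, g(a,b) = (S+a+b)^2/2 - c_{n̄-1} a - c_{n̄} b on [0,u_{n̄-1}] x [0,u_{n̄}].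
   As c_{n̄-1} >= c_{n̄}, moving mass from b to a at fixed a+b never increases g, so g is
   minimised on one of the edges b = 0 or a = u_{n̄-1}.  On each edge g is a quadratic
   (S'+t)^2/2 - m t in one variable, minimised on an interval at the projection of m - S';
   the sign conditions G_{n̄-1} < 0 <= G_{n̄} make these projections d1 and d2.  Case (ii)
   is the one-variable problem on [0,u_1] directly. *)

From mathcomp Require Import all_boot all_order all_algebra.
From mathcomp Require Import ring lra zify.
Set Implicit Arguments.
Unset Strict Implicit.
Unset Printing Implicit Defensive.
Import Order.TTheory GRing.Theory Num.Theory.
Local Open Scope ring_scope.

Section LineAndBox.
Variable R : realFieldType.

Definition line_obj (S m t : R) : R := (S + t) ^+ 2 / 2%:R - m * t.

Definition box_obj (S cp cq a b : R) : R :=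
  (S + a + b) ^+ 2 / 2%:R - (cp * a + cq * b).

Lemma line_obj_le (S m d t : R) :
  0 <= (t - d) * (S + d - m) -> line_obj S m d <= line_obj S m t.
Proof.
move=> h; rewrite -subr_ge0.
have -> : line_obj S m t - line_obj S m d
          = (t - d) * (S + d - m) + (t - d) ^+ 2 / 2%:R.
  by rewrite /line_obj; field.
by rewrite addr_ge0 // divr_ge0 ?sqr_ge0.
Qed.

Lemma line_obj_min_le (S m h t : R) :
  t <= h -> line_obj S m (Num.min (m - S) h) <= line_obj S m t.
Proof.
move=> th; apply: line_obj_le.
case: (lerP (m - S) h) => mh.
  by rewrite addrCA subrr addr0 subrr mulr0.
by apply: mulr_le0; lra.
Qed.

Lemma line_obj_max_le (S m t : R) :
  0 <= t -> line_obj S m (Num.max (m - S) 0) <= line_obj S m t.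
Proof.
move=> t0; apply: line_obj_le.
case: (lerP (m - S) 0) => m0.
  by apply: mulr_ge0; lra.
by rewrite addrCA subrr addr0 subrr mulr0.
Qed.

Lemma box_obj_min_le (S cp cq up a b : R) :
  cq <= cp -> a <= up -> 0 <= b ->
  Num.min (box_obj S cp cq (Num.min (cp - S) up) 0)
          (box_obj S cp cq up (Num.max (cq - (S + up)) 0))
  <= box_obj S cp cq a b.
Proof.
move=> cqp aup b0; rewrite ge_min; apply/orP.
have line1 t : box_obj S cp cq t 0 = line_obj S cp t.
  by rewrite /box_obj /line_obj addr0 mulr0 addr0.
have line2 t : box_obj S cp cq up t = line_obj (S + up) cq t - cp * up.
  by rewrite /box_obj /line_obj; ring.
case: (lerP (a + b) up) => hab; [left | right].
- have shift : box_obj S cp cq (a + b) 0 <= box_obj S cp cq a b.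
    have : 0 <= (cp - cq) * b by apply: mulr_ge0; lra.
    rewrite /box_obj; lra.
  by apply: le_trans shift; rewrite !line1 line_obj_min_le.
- have shift : box_obj S cp cq up (a + b - up) <= box_obj S cp cq a b.
    have : 0 <= (cp - cq) * (up - a) by apply: mulr_ge0; lra.
    rewrite /box_obj; lra.
  by apply: le_trans shift; rewrite !line2 lerD2r line_obj_max_le //; lra.
Qed.
End LineAndBox.

Section Vectors.
Variables (R : realFieldType) (n : nat) (u : 'I_n -> R).

Lemma sum_xk (k : nat) : \sum_i xk u k i = Usum u k.
Proof. by rewrite /Usum [RHS]big_mkcond; apply: eq_bigr. Qed.

Lemma sum_mul_evec (F : 'I_n -> R) (j : 'I_n) : \sum_i F i * evec R j i = F j.
Proof.
rewrite (bigD1 j) //= big1 => [|i /negbTE nij]; last by rewrite /evec nij mulr0.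
by rewrite /evec eqxx mulr1 addr0.
Qed.

Lemma Usum_succ (j : 'I_n) : Usum u j.+1 = Usum u j + u j.
Proof.
rewrite /Usum (bigD1 j) //= addrC; congr (_ + _); apply: eq_bigl => i.
by rewrite ltnS andbC -ltn_neqAle.
Qed.

Lemma xk_succ (j : 'I_n) (i : 'I_n) : xk u j.+1 i = xk u j i + u j * evec R j i.
Proof.
rewrite /xk /evec ltnS leq_eqVlt; case: (eqVneq i j) => [->|nij].
  by rewrite eqxx ltnn mulr1 add0r.
by rewrite mulr0 addr0 (val_eqE i j) (negbTE nij).
Qed.

Definition xk_add2 (k : nat) (p q : 'I_n) (a b : R) : 'I_n -> R :=
  fun i => xk u k i + a * evec R p i + b * evec R q i.

Lemma fobj_xk_add2 (c x : 'I_n -> R) (k : nat) (p q : 'I_n) (a b : R) :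
  x =1 xk_add2 k p q a b ->
  fobj c x = box_obj (Usum u k) (c p) (c q) a b - \sum_i c i * xk u k i.
Proof.
move=> hx; rewrite /fobj /box_obj.
under eq_bigr do rewrite hx /xk_add2.
under [X in _ - X]eq_bigr do rewrite hx /xk_add2 !mulrDr !mulrA.
rewrite !big_split /= sum_xk (sum_mul_evec (fun=> a)) (sum_mul_evec (fun=> b)).
by rewrite (sum_mul_evec (fun i => c i * a)) (sum_mul_evec (fun i => c i * b)); ring.
Qed.

Lemma fobj_scale_evec (c x : 'I_n -> R) (j : 'I_n) (a : R) :
  x =1 (fun i => a * evec R j i) -> fobj c x = line_obj 0 (c j) a.
Proof.
move=> hx; rewrite /fobj /line_obj add0r.
under eq_bigr do rewrite hx.
under [X in _ - X]eq_bigr do rewrite hx mulrCA.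
by rewrite (sum_mul_evec (fun=> a)) -mulr_sumr (sum_mul_evec c) (mulrC a).
Qed.

Lemma xk_box_out (k m : nat) (x : 'I_n -> R) (i : 'I_n) :
  (k <= m)%N -> vle (xk u k) x -> vle x (xk u m) -> ~~ (k <= i < m)%N ->
  x i = xk u k i.
Proof.
move=> km lo hi out; have := lo i; have := hi i; rewrite /xk.
by case: ifP => h1; case: ifP => h2 => xhi xlo; try lia; apply/le_anti/andP.
Qed.

Lemma xk_box_in (k m : nat) (x : 'I_n -> R) :
  (k <= m)%N ->
  (forall i : 'I_n, ~~ (k <= i < m)%N -> x i = xk u k i) ->
  (forall i : 'I_n, (k <= i < m)%N -> 0 <= x i <= u i) ->
  vle (xk u k) x /\ vle x (xk u m).
Proof.
move=> km out inn; split=> i; case: (boolP (k <= i < m)%N) => hi.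
all: first [have /andP[] := inn i hi | rewrite out //]; rewrite /xk.
all: by case: ifP => h1 //; try case: ifP => h2 //; lia.
Qed.

Lemma xk_box2_eq (x : 'I_n -> R) (p q : 'I_n) : q = p.+1 :> nat ->
  vle (xk u p) x -> vle x (xk u q.+1) -> x =1 xk_add2 p p q (x p) (x q).
Proof.
move=> hq lo hi i; rewrite /xk_add2 /evec.
case: (eqVneq i p) => [->|nip].
  have -> : (p == q) = false by rewrite -val_eqE /= hq; lia.
  by rewrite /xk ltnn mulr1 mulr0 addr0 add0r.
case: (eqVneq i q) => [->|niq].
  rewrite /xk ifN; last lia.
  by rewrite mulr0 mulr1 addr0 add0r.
rewrite !mulr0 !addr0; apply: xk_box_out lo hi _; first lia.
by move: nip niq; rewrite -!val_eqE /= hq; lia.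
Qed.

Lemma xk_box2_mem (y : 'I_n -> R) (p q : 'I_n) (a b : R) : q = p.+1 :> nat ->
  y =1 xk_add2 p p q a b -> 0 <= a <= u p -> 0 <= b <= u q ->
  vle (xk u p) y /\ vle y (xk u q.+1).
Proof.
move=> hq hy ha hb; have npq : (p == q) = false by rewrite -val_eqE /= hq; lia.
apply: xk_box_in => [|i|i]; first lia.
- rewrite hy /xk_add2 /evec -!val_eqE /= hq => out.
  by rewrite ifN ?ifN ?mulr0 ?addr0 //; lia.
- move=> inn; have /orP[/eqP->|/eqP->] : (i == p) || (i == q) by rewrite -!val_eqE /= hq; lia.
  + by rewrite hy /xk_add2 /evec /xk eqxx npq ltnn mulr1 mulr0 addr0 add0r.
  + rewrite hy /xk_add2 /evec /xk eqxx eq_sym npq ifN; last lia.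
    by rewrite mulr0 mulr1 !add0r.
Qed.

Lemma xk_box1_eq (x : 'I_n -> R) (j : 'I_n) : j = 0%N :> nat ->
  vle (xk u 0) x -> vle x (xk u 1) -> x =1 (fun i => x j * evec R j i).
Proof.
move=> hj lo hi i; rewrite /evec; case: (eqVneq i j) => [->|nij].
  by rewrite mulr1.
rewrite mulr0 (xk_box_out _ lo hi) //; move: nij; rewrite -val_eqE /= hj; lia.
Qed.

Lemma xk_box1_mem (j : 'I_n) (a : R) : j = 0%N :> nat -> 0 <= a <= u j ->
  vle (xk u 0) (fun i => a * evec R j i) /\ vle (fun i => a * evec R j i) (xk u 1).
Proof.
move=> hj ha; apply: xk_box_in => // i hi.
  by rewrite /evec ifN ?mulr0 // -val_eqE /= hj; lia.
have -> : i = j by apply/val_inj; rewrite /= hj; lia.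
by rewrite /evec eqxx mulr1.
Qed.
End Vectors.

Section OptimalValue.
Variables (R : realFieldType) (n : nat).
Variables (f : ('I_n -> R) -> R) (S : ('I_n -> R) -> Prop).

Lemma optimal_value_attained (x0 : 'I_n -> R) :
  S x0 -> (forall x, S x -> f x0 <= f x) -> optimal_value f S (f x0).
Proof. by move=> Sx0 low; split=> // e e0; exists x0; rewrite ltrDl. Qed.

Lemma optimal_value_min2 (x1 x2 : 'I_n -> R) : S x1 -> S x2 ->
  (forall x, S x -> Num.min (f x1) (f x2) <= f x) ->
  optimal_value f S (Num.min (f x1) (f x2)).
Proof. by move=> S1 S2; case: leP => _ low; apply: optimal_value_attained. Qed.
End OptimalValue.

Section BoxOptimum.
Variables (R : realFieldType) (n : nat) (c u : 'I_n -> R).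

Lemma optimal_value_box2 (p q : 'I_n) (x1 x2 : 'I_n -> R) :
  q = p.+1 :> nat -> c q <= c p -> 0 <= u p -> 0 <= u q ->
  Usum u p <= c p -> c q - Usum u q <= u q ->
  x1 =1 xk_add2 u p p q (Num.min (c p - Usum u p) (u p)) 0 ->
  x2 =1 xk_add2 u p p q (u p) (Num.max (c q - Usum u q) 0) ->
  optimal_value (fobj c) (fun x => vle (xk u p) x /\ vle x (xk u q.+1))
    (Num.min (fobj c x1) (fobj c x2)).
Proof.
move=> hq cqp up0 uq0 Sp Sq ex1 ex2.
have Usum_q : Usum u q = Usum u p + u p by rewrite hq Usum_succ.
have d1_box : 0 <= Num.min (c p - Usum u p) (u p) <= u p.
  by case: (lerP (c p - Usum u p) (u p)) => h; apply/andP; split; lra.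
have d2_box : 0 <= Num.max (c q - Usum u q) 0 <= u q.
  by case: (lerP (c q - Usum u q) 0) => h; apply/andP; split; lra.
apply: optimal_value_min2.
- have b0 : (0 : R) <= 0 <= u q by rewrite lexx uq0.
  exact: xk_box2_mem hq ex1 d1_box b0.
- have a_up : 0 <= u p <= u p by rewrite lexx up0.
  exact: xk_box2_mem hq ex2 a_up d2_box.
move=> x [lo hi]; have ex := xk_box2_eq hq lo hi.
rewrite (fobj_xk_add2 c ex1) (fobj_xk_add2 c ex2) (fobj_xk_add2 c ex).
rewrite ge_min !lerD2r -ge_min Usum_q; apply: box_obj_min_le => //.
  by move: (hi p); rewrite /xk ifT //; lia.
by move: (lo q); rewrite /xk ifN //; lia.
Qed.

Lemma optimal_value_box1 (j : 'I_n) : j = 0%N :> nat -> 0 <= c j -> 0 <= u j ->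
  optimal_value (fobj c) (fun x => vle (xk u 0) x /\ vle x (xk u 1))
    (fobj c (fun i => Num.min (c j) (u j) * evec R j i)).
Proof.
move=> hj cj0 uj0; have d_box : 0 <= Num.min (c j) (u j) <= u j.
  by case: (lerP (c j) (u j)) => h; apply/andP; split; lra.
apply: optimal_value_attained; first exact: xk_box1_mem.
move=> x [lo hi]; rewrite (fobj_scale_evec c (frefl _)).
rewrite (fobj_scale_evec c (xk_box1_eq hj lo hi)).
have := line_obj_min_le 0 (c j) (_ : x j <= u j); rewrite subr0; apply.
by move: (hi j); rewrite /xk hj.
Qed.
End BoxOptimum.

Theorem theorem2 (R : realFieldType) (n : nat) (hn : (1 <= n)%N)
  (c u : 'I_n -> R)
  (hc_mono : forall i j : 'I_n, (i <= j)%N -> c j <= c i)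
  (hc_nonneg : forall i : 'I_n, 0 <= c i)
  (hu : forall i : 'I_n, 0 < u i)
  (nb : 'I_n)
  (hG_nb : 0 <= Gval c u nb)
  (hG_min : forall j : 'I_n, (j < nb)%N -> Gval c u j < 0) :
  ((0 < nb)%N ->
     let p := prevo nb in
     let d1 := Num.min (c p - Usum u nb.-1) (u p) in
     let d2 := Num.max (c nb - Usum u nb) 0 in
     let xbar := fun i => xk u nb.-1 i + d1 * evec R p i in
     let xtil := fun i => xk u nb i + d2 * evec R nb i in
     optimal_value (fobj c)
       (fun x => vle (xk u nb.-1) x /\ vle x (xk u nb.+1))
       (Num.min (fobj c xbar) (fobj c xtil))) /\
  (nb = 0%N :> nat ->
     let d := Num.min (c nb) (u nb) in
     let xtil := fun i => d * evec R nb i in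
     optimal_value (fobj c)
       (fun x => vle (xk u 0) x /\ vle x (xk u 1))
       (fobj c xtil)).
Proof.
split=> [nb_gt0 p d1 d2 xbar xtil | nb0 d xtil].
- have nbE : nb = p.+1 :> nat by rewrite prednK.
  have Gp : Gval c u p < 0 by apply: hG_min; rewrite nbE.
  move: Gp hG_nb (hu p) (hu nb); rewrite /Gval => Gp Gnb up0 unb0.
  apply: (optimal_value_box2 nbE).
  + by apply: hc_mono; rewrite nbE.
  + exact: ltW.
  + exact: ltW.
  + lra.
  + lra.
  + by move=> i; rewrite /xk_add2 mul0r addr0.
  + by move=> i; rewrite /xtil /xk_add2 -xk_succ -nbE.
- exact: optimal_value_box1 nb0 (hc_nonneg nb) (ltW (hu nb)).
Qed.
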